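(* Let $\mathcal{H}_{\rm kin}=\mathcal{H}_R\otimes\mathcal{H}_S$ be a local QRF-system partition for an $[[n,k]]$ Pauli stabilizer code, with $\mathcal{H}_R\simeq(\mathbb{C}^2)^{\otimes(n-k)}$ consisting of $n-k$ physical qubits, such that $G=\mathbb{Z}_2^{\times(n-k)}$ is represented by the code's stabilizers as $g\mapsto U^g_R\otimes U^g_S$, where $g\mapsto U^g_R$ is faithful (possibly projective), $g\mapsto U^g_S$ is non-trivial, and the orientation states satisfy $\braket{g}{h}_R=\delta_{g,h}$ ($R$ ideal). Let $\mathcal{E}=\{E_1,\ldots,E_m\}$ be a set of correctable Pauli errors. Then for every $\ket{\bar\psi}=T_R^\dagger(\ket1_R\otimes\ket\psi_S)\in\mathcal{H}_{\rm pn}$, $$T_RE_i\ket{\bar\psi}=\ket{w(E_i)}_R\otimes L_S(E_i)\ket\psi_S,$$ for some collection of orthonormal states $\ket{w(E_i)}_R\in\mathcal{H}_R$ and unitary operators $L_S(E_i)$ on $\mathcal{H}_S$ (independent of $\psi$).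
   Context: An $[[n,k]]$ Pauli stabilizer code: $\mathcal{H}_{\rm kin}=(\mathbb{C}^2)^{\otimes n}$, $\mathcal{P}_n$ the $n$-qubit Pauli group, $G=\mathbb{Z}_2^{\times(n-k)}$, $g\mapsto U^g\in\mathcal{P}_n$ a faithful unitary representation with $-I\notin U(G)$; $\mathcal{H}_{\rm pn}$ is the common $+1$ eigenspace, $\Pi_{\rm pn}=\frac1{|G|}\sum_gU^g$. Local partition: $R$ is a set of $n-k$ qubits, $S$ the remaining $k$ qubits, $U^g_R$ is the Pauli string of $U^g$ on the qubits of $R$ with prefactor removed and $U^g_S$ the remaining part (carrying the sign), so $U^g=U^g_R\otimes U^g_S$; $U^g_RU^h_R=c(g,h)U^{gh}_R$ with phases $c(g,h)$. The orientation states are $\ket g_R:=U^g_R\ket e_R$ for a seed state $\ket e_R$, forming an orthonormal basis of $\mathcal{H}_R$. Define $\ket1_R=|G|^{-1/2}\sum_g\ket g_R$ and the disentangler $T_R=\sum_{g\in G}\ket g\!\bra g_R\otimes(U^g_S)^\dagger$. A set $\{E_i\}$ is correctable if $\Pi_{\rm pn}E_i^\dagger E_j\Pi_{\rm pn}=C_{ij}\Pi_{\rm pn}$ with $(C_{ij})$ Hermitian. *)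

From HB Require Import structures.
From mathcomp Require Import all_boot all_order all_algebra algC.
Set Implicit Arguments. Unset Strict Implicit. Unset Printing Implicit Defensive.
Import Order.TTheory GRing.Theory Num.Theory.
Local Open Scope ring_scope.

(* vectors of the Hilbert space C^T and operators on it (matrices indexed by T) *)
Notation vect T := {ffun T -> algC}.
Notation oper T := {ffun (T * T)%type -> algC}.

Definition app (T : finType) (A : oper T) (v : vect T) : vect T :=
  [ffun y => \sum_x A (y, x) * v x].
Definition mulo (T : finType) (A B : oper T) : oper T :=
  [ffun p => \sum_z A (p.1, z) * B (z, p.2)].
Definition adjo (T : finType) (A : oper T) : oper T :=
  [ffun p => (A (p.2, p.1))^*].
Definition ido (T : finType) : oper T := [ffun p => (p.1 == p.2)%:R].
Definition oppo (T : finType) (A : oper T) : oper T := [ffun p => - A p].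
Definition scaleo (T : finType) (c : algC) (A : oper T) : oper T :=
  [ffun p => c * A p].
Definition dotv (T : finType) (u v : vect T) : algC := \sum_x (u x)^* * v x.
Definition outer (T : finType) (u v : vect T) : oper T :=
  [ffun p => u p.1 * (v p.2)^*].
Definition tensv (A B : finType) (u : vect A) (v : vect B) : vect (A * B) :=
  [ffun p => u p.1 * v p.2].
Definition tenso (A B : finType) (X : oper A) (Y : oper B) : oper (A * B) :=
  [ffun p => X (p.1.1, p.2.1) * Y (p.1.2, p.2.2)].
Definition unitary (T : finType) (U : oper T) : Prop := mulo (adjo U) U = ido T.

Notation qR R := {i | i \in R}.
Notation qS R := {i | i \notin R}.
(* computational basis of H_R = (C^2)^{(x) R} and of H_S = (C^2)^{(x) S} *)
Notation confR R := {ffun qR R -> bool}.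
Notation confS R := {ffun qS R -> bool}.
(* computational basis of H_kin = (C^2)^{(x) n} = H_R (x) H_S *)
Notation kin R := (confR R * confS R)%type.

Definition bitAt (n : nat) (R : {set 'I_n}) (x : kin R) (i : 'I_n) : bool :=
  if (insub i : option (qR R)) is Some j then x.1 j
  else if (insub i : option (qS R)) is Some j then x.2 j else false.

(* single-qubit Pauli letter encoded by (x-bit, z-bit):
   (0,0) = I, (1,0) = X, (0,1) = Z, (1,1) = Y = i X Z.
   sigma l y x = <y| sigma_l |x>. *)
Definition sigma (l : bool * bool) (y x : bool) : algC :=
  match l with
  | (false, false) => (y == x)%:R
  | (true, false) => (y == ~~ x)%:R
  | (false, true) => (y == x)%:R * (-1) ^+ x
  | (true, true) => (y == ~~ x)%:R * 'i * (-1) ^+ x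
  end.

(* an element of the n-qubit Pauli group P_n: prefactor i^c and a Pauli string *)
Definition pauli (n : nat) := ('I_4 * {ffun 'I_n -> bool * bool})%type.

Definition pauli_op (n : nat) (R : {set 'I_n}) (P : pauli n) : oper (kin R) :=
  [ffun p : kin R * kin R => 'i ^+ P.1 *
     \prod_(i < n) sigma (P.2 i) (bitAt p.1 i) (bitAt p.2 i)].
(* U_R : the Pauli string on the qubits of R, prefactor removed *)
Definition pauliR (n : nat) (R : {set 'I_n}) (P : pauli n) : oper (confR R) :=
  [ffun p : confR R * confR R => \prod_(j : qR R) sigma (P.2 (val j)) (p.1 j) (p.2 j)].
(* U_S : the remaining part, carrying the prefactor *)
Definition pauliS (n : nat) (R : {set 'I_n}) (P : pauli n) : oper (confS R) :=
  [ffun p : confS R * confS R => 'i ^+ P.1 *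
     \prod_(j : qS R) sigma (P.2 (val j)) (p.1 j) (p.2 j)].

Definition grp (d : nat) := {ffun 'I_d -> bool}.
Definition gmul (d : nat) (g h : grp d) : grp d := [ffun i => g i (+) h i].

Section Code.
Variables (n d : nat) (R : {set 'I_n}) (U : grp d -> pauli n) (e : vect (confR R)).

Definition pauli_stab_rep : Prop :=
  [/\ forall g h, pauli_op R (U (gmul g h)) = mulo (pauli_op R (U g)) (pauli_op R (U h)),
      injective (fun g => pauli_op R (U g)) &
      forall g, pauli_op R (U g) <> oppo (ido (kin R))].

Definition Pi_pn : oper (kin R) :=
  [ffun p => (#|{: grp d}|%:R)^-1 * \sum_g pauli_op R (U g) p].

Definition orient (g : grp d) : vect (confR R) := app (pauliR R (U g)) e.

Definition oneR : vect (confR R) :=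
  [ffun a => (sqrtC (#|{: grp d}|%:R))^-1 * \sum_g orient g a].

Definition TR : oper (kin R) :=
  [ffun p => \sum_g tenso (outer (orient g) (orient g)) (adjo (pauliS R (U g))) p].

(* correctable set of errors (Knill-Laflamme with Hermitian C) *)
Definition correctable (m : nat) (E : 'I_m -> pauli n) : Prop :=
  exists C : 'I_m -> 'I_m -> algC,
    (forall i j, C j i = (C i j)^*) /\
    forall i j, mulo Pi_pn (mulo (mulo (adjo (pauli_op R (E i))) (pauli_op R (E j))) Pi_pn)
                = scaleo (C i j) Pi_pn.
End Code.

Arguments pauli_stab_rep {n d} R U.
Arguments Pi_pn {n d} R U.
Arguments orient {n d} R U e g.
Arguments oneR {n d} R U e.
Arguments TR {n d} R U e.
Arguments correctable {n d} R U {m} E.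
Arguments pauli_op {n} R P.
Arguments pauliR {n} R P.
Arguments pauliS {n} R P.

(* Since dim H_R = |G| and the orientation states are orthonormal, they form a
   basis of H_R and the disentangler T_R is unitary.  A physical state is
   T_R^dagger (|1>_R (x) psi) = |G|^(-1/2) sum_g U^g (|e>_R (x) psi), which every
   stabilizer U^h fixes.  A Pauli error E commutes with U^h up to a sign chi_E(h),
   the syndrome of E, and chi_E is a character of G.  Hence the component of
   T_R E T_R^dagger (|1>_R (x) psi) along |h>_R is chi_E(h) |G|^(-1/2) times one
   vector L(E) psi of H_S, giving the product form with
   |w(E)> = |G|^(-1/2) sum_h chi_E(h) |h>_R.  Orthogonality of characters makes
   two such |w(E)> equal or orthogonal, and L(E) is unitary because it is an
   isometry of H_S assembled from the unitaries T_R, E and T_R^dagger. *)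

From HB Require Import structures.
From mathcomp Require Import all_boot all_order all_algebra algC.
From mathcomp Require Import ring.
Import Order.TTheory GRing.Theory Num.Theory.
Local Open Scope ring_scope.
Set Implicit Arguments. Unset Strict Implicit. Unset Printing Implicit Defensive.

Lemma sum_delta (I : finType) (i : I) (F : I -> algC) :
  \sum_j (i == j)%:R * F j = F i.
Proof.
rewrite (bigD1 i) //= eqxx mul1r big1 ?addr0 // => j ji.
by rewrite eq_sym (negbTE ji) mul0r.
Qed.

Section Operators.
Variable T : finType.
Implicit Types (A B : oper T) (a b u v : vect T).

Lemma muloA A B C : mulo (mulo A B) C = mulo A (mulo B C).
Proof.
apply/ffunP=> p; rewrite !ffunE /=.
under eq_bigr do rewrite ffunE big_distrl /=.
rewrite exchange_big; apply: eq_bigr => w _.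
by rewrite ffunE big_distrr; apply: eq_bigr => z _ /=; rewrite mulrA.
Qed.

Lemma app_mulo A B v : app (mulo A B) v = app A (app B v).
Proof.
apply/ffunP=> y; rewrite !ffunE.
under eq_bigr do rewrite ffunE big_distrl /=.
rewrite exchange_big; apply: eq_bigr => w _.
by rewrite ffunE big_distrr; apply: eq_bigr => z _ /=; rewrite mulrA.
Qed.

Lemma mul1o A : mulo (ido T) A = A.
Proof.
apply/ffunP=> [[x y]]; rewrite ffunE (bigD1 x) //= big1 => [|z zx].
  by rewrite ffunE eqxx mul1r addr0.
by rewrite ffunE /= eq_sym (negbTE zx) mul0r.
Qed.

Lemma mulo1 A : mulo A (ido T) = A.
Proof.
apply/ffunP=> [[x y]]; rewrite ffunE (bigD1 y) //= big1 => [|z zy].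
  by rewrite ffunE eqxx mulr1 addr0.
by rewrite ffunE /= (negbTE zy) mulr0.
Qed.

Lemma app1o v : app (ido T) v = v.
Proof.
apply/ffunP=> y; rewrite ffunE (bigD1 y) //= big1 => [|x xy].
  by rewrite ffunE eqxx mul1r addr0.
by rewrite ffunE /= eq_sym (negbTE xy) mul0r.
Qed.

Lemma adjoK : involutive (@adjo T).
Proof. by move=> A; apply/ffunP=> p; rewrite !ffunE conjCK; case: p. Qed.

Lemma adjo_mulo A B : adjo (mulo A B) = mulo (adjo B) (adjo A).
Proof.
apply/ffunP=> p; rewrite !ffunE rmorph_sum; apply: eq_bigr => z _.
by rewrite !ffunE rmorphM mulrC.
Qed.

Lemma mulo_scalel c A B : mulo (scaleo c A) B = scaleo c (mulo A B).
Proof.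
apply/ffunP=> p; rewrite !ffunE big_distrr; apply: eq_bigr => z _.
by rewrite ffunE /= mulrA.
Qed.

Lemma mulo_scaler c A B : mulo A (scaleo c B) = scaleo c (mulo A B).
Proof.
apply/ffunP=> p; rewrite !ffunE big_distrr; apply: eq_bigr => z _.
by rewrite ffunE /= mulrCA.
Qed.

Lemma scaleoA c c' A : scaleo c (scaleo c' A) = scaleo (c * c') A.
Proof. by apply/ffunP=> p; rewrite !ffunE mulrA. Qed.

Lemma adjo_scale c A : adjo (scaleo c A) = scaleo c^* (adjo A).
Proof. by apply/ffunP=> p; rewrite !ffunE rmorphM. Qed.

Lemma app_scaleo c A v : app (scaleo c A) v = [ffun y => c * app A v y].
Proof.
apply/ffunP=> y; rewrite !ffunE big_distrr; apply: eq_bigr => x _.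
by rewrite ffunE /= mulrA.
Qed.

Lemma app_scalev c A v : app A [ffun y => c * v y] = [ffun y => c * app A v y].
Proof.
apply/ffunP=> y; rewrite !ffunE big_distrr; apply: eq_bigr => x _.
by rewrite ffunE /= mulrCA.
Qed.

Lemma mulo_suml (I : finType) (F : I -> oper T) B :
  mulo (\sum_i F i) B = \sum_i mulo (F i) B.
Proof.
apply/ffunP=> p; rewrite ffunE !sum_ffunE.
under eq_bigr do rewrite sum_ffunE big_distrl.
by rewrite exchange_big; apply: eq_bigr => i _; rewrite ffunE.
Qed.

Lemma mulo_sumr (I : finType) A (F : I -> oper T) :
  mulo A (\sum_i F i) = \sum_i mulo A (F i).
Proof.
apply/ffunP=> p; rewrite ffunE !sum_ffunE.
under eq_bigr do rewrite sum_ffunE big_distrr.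
by rewrite exchange_big; apply: eq_bigr => i _; rewrite ffunE.
Qed.

Lemma adjo_sum (I : finType) (F : I -> oper T) :
  adjo (\sum_i F i) = \sum_i adjo (F i).
Proof.
apply/ffunP=> p; rewrite ffunE !sum_ffunE rmorph_sum.
by apply: eq_bigr => i _; rewrite ffunE.
Qed.

Lemma app_sumo (I : finType) (F : I -> oper T) v :
  app (\sum_i F i) v = \sum_i app (F i) v.
Proof.
apply/ffunP=> y; rewrite ffunE !sum_ffunE.
under eq_bigr do rewrite sum_ffunE big_distrl.
by rewrite exchange_big; apply: eq_bigr => i _; rewrite ffunE.
Qed.

Lemma app_sumv (I : finType) A (F : I -> vect T) :
  app A (\sum_i F i) = \sum_i app A (F i).
Proof.
apply/ffunP=> y; rewrite ffunE !sum_ffunE.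
under eq_bigr do rewrite sum_ffunE big_distrr.
by rewrite exchange_big; apply: eq_bigr => i _; rewrite ffunE.
Qed.

Lemma dotv_adj A u v : dotv (app A u) v = dotv u (app (adjo A) v).
Proof.
rewrite /dotv; under eq_bigr do rewrite ffunE rmorph_sum big_distrl.
rewrite exchange_big; apply: eq_bigr => x _.
rewrite ffunE big_distrr; apply: eq_bigr => y _.
by rewrite !ffunE rmorphM /=; ring.
Qed.

Lemma dotv_unitary A u v : unitary A -> dotv (app A u) (app A v) = dotv u v.
Proof. by move=> AU; rewrite dotv_adj -app_mulo AU app1o. Qed.

Lemma unitary_mulo A B : unitary A -> unitary B -> unitary (mulo A B).
Proof.
move=> AU BU; rewrite /unitary adjo_mulo muloA -(muloA (adjo A)) AU.
by rewrite mul1o BU.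
Qed.

Lemma unitary_scaleo c A : c^* * c = 1 -> unitary A -> unitary (scaleo c A).
Proof.
move=> c_unit AU; rewrite /unitary adjo_scale mulo_scalel mulo_scaler scaleoA AU.
by apply/ffunP=> p; rewrite !ffunE c_unit mul1r.
Qed.

Lemma sum_scaleo_delta (I : finType) (i : I) (F : I -> oper T) :
  \sum_j scaleo (i == j)%:R (F j) = F i.
Proof.
rewrite (bigD1 i) //= big1 => [|j ji]; last first.
  by apply/ffunP=> p; rewrite !ffunE eq_sym (negbTE ji) mul0r.
by rewrite addr0; apply/ffunP=> p; rewrite !ffunE eqxx mul1r.
Qed.

Lemma dotv_orthonormal_sum (G : finType) (o : G -> vect T) (c c' : G -> algC) :
  (forall g h, dotv (o g) (o h) = (g == h)%:R) ->
  dotv [ffun x => \sum_g c g * o g x] [ffun x => \sum_g c' g * o g x] =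
  \sum_g (c g)^* * c' g.
Proof.
move=> orth.
transitivity (\sum_g \sum_h (c g)^* * c' h * dotv (o g) (o h)).
  rewrite /dotv; under [RHS]eq_bigr => g _ do under eq_bigr => h _ do rewrite big_distrr.
  under [RHS]eq_bigr => g _ do rewrite exchange_big; rewrite [RHS]exchange_big.
  apply: eq_bigr => x _; rewrite !ffunE rmorph_sum big_distrl; apply: eq_bigr => g _.
  rewrite big_distrr; apply: eq_bigr => h _ /=; rewrite rmorphM /=; ring.
apply: eq_bigr => g _; under eq_bigr do rewrite orth mulrC.
exact: sum_delta.
Qed.

Lemma app_outer a b v : app (outer a b) v = [ffun y => dotv b v * a y].
Proof.
apply/ffunP=> y; rewrite !ffunE /dotv big_distrl; apply: eq_bigr => x _.
by rewrite ffunE /=; ring.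
Qed.

Lemma mulo_outer a b (a' b' : vect T) :
  mulo (outer a b) (outer a' b') = scaleo (dotv b a') (outer a b').
Proof.
apply/ffunP=> p; rewrite !ffunE /dotv big_distrl; apply: eq_bigr => z _.
by rewrite !ffunE /=; ring.
Qed.

Lemma adjo_outer a b : adjo (outer a b) = outer b a.
Proof. by apply/ffunP=> p; rewrite !ffunE /= rmorphM /= conjCK mulrC. Qed.

Lemma unitary_neq0 (x : T) A : unitary A -> exists p, A p != 0.
Proof.
move=> AU; apply/existsP; apply: contraT; rewrite negb_exists => /forallP A0.
have := congr1 (fun M : oper T => M (x, x)) AU.
rewrite !ffunE eqxx big1 => [/eqP|z _]; first by rewrite eq_sym oner_eq0.
by rewrite (eqP (negPn (A0 _))) mulr0.
Qed.

Lemma scaleo_inj (x : T) c c' A : unitary A -> scaleo c A = scaleo c' A -> c = c'.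
Proof.
move=> /(unitary_neq0 x) [p Ap0] /(congr1 (fun M : oper T => M p)).
by rewrite !ffunE; apply: mulIf.
Qed.

Definition mx_of_oper A : 'M[algC]_#|T| := \matrix_(i, j) A (enum_val i, enum_val j).

Lemma mx_of_oper_mul A B : mx_of_oper (mulo A B) = mx_of_oper A *m mx_of_oper B.
Proof.
apply/matrixP=> i j; rewrite !mxE ffunE /=.
rewrite (reindex (@enum_val T _ : 'I_#|T| -> T)) /=; last first.
  by exists enum_rank => x _; [rewrite enum_valK | rewrite enum_rankK].
by apply: eq_bigr => k _; rewrite !mxE.
Qed.

Lemma mx_of_oper1 : mx_of_oper (ido T) = 1%:M.
Proof.
apply/matrixP=> i j; rewrite !mxE ffunE /=.
by rewrite (inj_eq (can_inj (@enum_valK T))).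
Qed.

Lemma mx_of_oper_inj : injective mx_of_oper.
Proof.
move=> A B /matrixP AB; apply/ffunP=> [[x y]].
by have := AB (enum_rank x) (enum_rank y); rewrite !mxE !enum_rankK.
Qed.

Lemma mulo1C A B : mulo A B = ido T -> mulo B A = ido T.
Proof.
move=> AB; apply: mx_of_oper_inj; rewrite mx_of_oper_mul mx_of_oper1.
by apply: mulmx1C; rewrite -mx_of_oper_mul AB mx_of_oper1.
Qed.

Lemma isometry_unitary A :
  (forall u v, dotv (app A u) (app A v) = dotv u v) -> unitary A.
Proof.
move=> Aiso; pose delta c : vect T := [ffun x => (x == c)%:R].
have dot_delta c v : dotv (delta c) v = v c.
  rewrite /dotv (bigD1 c) //= big1 => [|x xc].
    by rewrite ffunE eqxx conjC1 mul1r addr0.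
  by rewrite ffunE (negbTE xc) conjC0 mul0r.
have app_delta c x : app A (delta c) x = A (x, c).
  rewrite ffunE (bigD1 c) //= big1 => [|y yc]; first by rewrite ffunE eqxx mulr1 addr0.
  by rewrite ffunE (negbTE yc) mulr0.
apply/ffunP=> [[a b]]; rewrite !ffunE /=.
transitivity (dotv (app A (delta a)) (app A (delta b))).
  by rewrite /dotv; apply: eq_bigr => x _; rewrite !app_delta ffunE.
by rewrite Aiso dot_delta ffunE eq_sym.
Qed.

Lemma sum_outer_orthonormal (G : finType) (o : G -> vect T) :
  #|T| = #|G| -> (forall g h, dotv (o g) (o h) = (g == h)%:R) ->
  \sum_g outer (o g) (o g) = ido T.
Proof.
move=> cardTG orth.
pose f x : G := enum_val (cast_ord cardTG (enum_rank x)).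
pose f' g : T := enum_val (cast_ord (esym cardTG) (enum_rank g)).
have fK : cancel f f' by move=> x; rewrite /f /f' enum_valK cast_ordK enum_rankK.
have f'K : cancel f' f by move=> g; rewrite /f /f' enum_valK cast_ordKV enum_rankK.
(* The columns of O are orthonormal; in finite dimension so are its rows. *)
pose O : oper T := [ffun q => o (f q.2) q.1].
have : mulo (adjo O) O = ido T.
  apply/ffunP=> [[x y]]; rewrite !ffunE /= -(inj_eq (can_inj fK)) -orth /dotv.
  by apply: eq_bigr => z _; rewrite !ffunE.
move/mulo1C/ffunP => OO'; apply/ffunP=> [[a b]].
rewrite -OO' sum_ffunE [RHS]ffunE /= (reindex f); last first.
  by exists f' => ? _; [apply: fK | apply: f'K].
by apply: eq_bigr => z _; rewrite !ffunE.
Qed.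

End Operators.

Lemma sum_pair (X Y : finType) (F : X * Y -> algC) :
  \sum_p F p = \sum_x \sum_y F (x, y).
Proof. by rewrite pair_bigA; apply: eq_bigr => [[]]. Qed.

Section Tensor.
Variables X Y : finType.

Lemma app_tens (P : oper X) (Q : oper Y) u v :
  app (tenso P Q) (tensv u v) = tensv (app P u) (app Q v).
Proof.
apply/ffunP=> [[a b]]; rewrite !ffunE /= sum_pair big_distrl /=.
apply: eq_bigr => x _; rewrite big_distrr; apply: eq_bigr => y _ /=.
by rewrite !ffunE /=; ring.
Qed.

Lemma mulo_tens (P P' : oper X) (Q Q' : oper Y) :
  mulo (tenso P Q) (tenso P' Q') = tenso (mulo P P') (mulo Q Q').
Proof.
apply/ffunP=> [[[a b] [a' b']]]; rewrite !ffunE /= sum_pair big_distrl /=.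
apply: eq_bigr => x _; rewrite big_distrr; apply: eq_bigr => y _ /=.
by rewrite !ffunE /=; ring.
Qed.

Lemma adjo_tens (P : oper X) (Q : oper Y) : adjo (tenso P Q) = tenso (adjo P) (adjo Q).
Proof. by apply/ffunP=> [[[a b] [a' b']]]; rewrite !ffunE /= rmorphM. Qed.

Lemma tenso_id : tenso (ido X) (ido Y) = ido (X * Y)%type.
Proof.
apply/ffunP=> [[[a b] [a' b']]]; rewrite !ffunE /= xpair_eqE.
by case: (a == a'); case: (b == b'); rewrite /= ?mulr1 ?mul0r ?mul1r.
Qed.

Lemma unitary_tens (P : oper X) (Q : oper Y) :
  unitary P -> unitary Q -> unitary (tenso P Q).
Proof. by move=> PU QU; rewrite /unitary adjo_tens mulo_tens PU QU tenso_id. Qed.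

Lemma tenso_scalel c (P : oper X) (Q : oper Y) :
  tenso (scaleo c P) Q = scaleo c (tenso P Q).
Proof. by apply/ffunP=> p; rewrite !ffunE mulrA. Qed.

Lemma tenso_scaler c (P : oper X) (Q : oper Y) :
  tenso P (scaleo c Q) = scaleo c (tenso P Q).
Proof. by apply/ffunP=> p; rewrite !ffunE mulrCA. Qed.

Lemma tenso_suml (I : finType) (F : I -> oper X) (Q : oper Y) :
  tenso (\sum_i F i) Q = \sum_i tenso (F i) Q.
Proof.
apply/ffunP=> p; rewrite ffunE !sum_ffunE big_distrl.
by apply: eq_bigr => i _; rewrite ffunE.
Qed.

Lemma dotv_tens (u u' : vect X) (v v' : vect Y) :
  dotv (tensv u v) (tensv u' v') = dotv u u' * dotv v v'.
Proof.
rewrite /dotv sum_pair big_distrl /=; apply: eq_bigr => a _.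
rewrite big_distrr; apply: eq_bigr => b _ /=; rewrite !ffunE rmorphM /=; ring.
Qed.

Lemma sum_tensv_scale (I : finType) (c : I -> algC) (a : I -> vect X) (v : vect Y) :
  \sum_i tensv (a i) [ffun t => c i * v t] = tensv [ffun r => \sum_i c i * a i r] v.
Proof.
apply/ffunP=> [[r t]]; rewrite sum_ffunE !ffunE /= big_distrl.
by apply: eq_bigr => i _; rewrite !ffunE /=; ring.
Qed.

Definition partial_dotv (a : vect X) (v : vect (X * Y)) : vect Y :=
  [ffun t => \sum_r (a r)^* * v (r, t)].

Lemma partial_dotv_scale a c (v : vect (X * Y)) :
  partial_dotv a [ffun z => c * v z] = [ffun t => c * partial_dotv a v t].
Proof.
apply/ffunP=> t; rewrite !ffunE big_distrr; apply: eq_bigr => r _.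
by rewrite ffunE mulrCA.
Qed.

Definition compress (a : vect X) (Z : oper (X * Y)) : oper Y :=
  [ffun q => \sum_r \sum_r' (a r)^* * Z ((r, q.1), (r', q.2)) * a r'].

Lemma app_compress a Z v : app (compress a Z) v = partial_dotv a (app Z (tensv a v)).
Proof.
apply/ffunP=> t; rewrite !ffunE.
transitivity (\sum_y \sum_r \sum_r' (a r)^* * Z ((r, t), (r', y)) * a r' * v y).
  apply: eq_bigr => y _; rewrite ffunE big_distrl; apply: eq_bigr => r _.
  by rewrite big_distrl.
rewrite exchange_big; apply: eq_bigr => r _; rewrite exchange_big.
rewrite [app _ _ _]ffunE sum_pair big_distrr; apply: eq_bigr => r' _.
by rewrite big_distrr; apply: eq_bigr => y _; rewrite ffunE /=; ring.
Qed.

Lemma app_tenso_outer (A : oper X) (Q : oper Y) a v :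
  app (tenso (outer (app A a) (app A a)) (adjo Q)) v =
  tensv (app A a) (partial_dotv a (app (adjo (tenso A Q)) v)).
Proof.
set Aa := app A a.
have AaE x : (Aa x)^* = \sum_r' (A (x, r'))^* * (a r')^*.
  by rewrite ffunE rmorph_sum; apply: eq_bigr => r' _; rewrite rmorphM.
apply/ffunP=> [[r t]]; rewrite [LHS]ffunE [RHS]ffunE /= [partial_dotv _ _ _]ffunE.
rewrite big_distrr.
under [RHS]eq_bigr => r' _ do rewrite [app _ _ (r', t)]ffunE !big_distrr.
rewrite [RHS]exchange_big; apply: eq_bigr => p _ /=.
rewrite [tenso _ _ _]ffunE [outer _ _ _]ffunE [adjo Q _]ffunE /= AaE.
rewrite big_distrr !big_distrl /=; apply: eq_bigr => r' _.
rewrite [adjo _ _]ffunE [tenso _ _ _]ffunE /= rmorphM /=; ring.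
Qed.

End Tensor.

Section Monomial.
Variable T : finType.

Definition monomial (pi : T -> T) (f : T -> algC) : oper T :=
  [ffun q => (q.1 == pi q.2)%:R * f q.2].

Lemma mulo_monomial pi f sg g :
  mulo (monomial pi f) (monomial sg g) = monomial (pi \o sg) (fun x => f (sg x) * g x).
Proof.
apply/ffunP=> [[y x]]; rewrite !ffunE /= (bigD1 (sg x)) //= big1 => [|z zx].
  by rewrite !ffunE /= eqxx mulr1n addr0; ring.
by rewrite !ffunE /= (negbTE zx) mul0r mulr0.
Qed.

Lemma adjo_monomial pi f : involutive pi ->
  adjo (monomial pi f) = monomial pi (fun x => (f (pi x))^*).
Proof.
move=> piK; apply/ffunP=> [[y x]]; rewrite !ffunE /= rmorphM /= conjC_nat.
have [->|xpy] := eqVneq x (pi y); first by rewrite piK !eqxx.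
have -> : (y == pi x) = false by apply: contraNF xpy => /eqP ->; rewrite piK.
by rewrite !mul0r.
Qed.

Lemma eq_monomial pi sg f g : pi =1 sg -> f =1 g -> monomial pi f = monomial sg g.
Proof. by move=> pisg fg; apply/ffunP=> q; rewrite !ffunE pisg fg. Qed.

Lemma scaleo_monomial c pi f :
  scaleo c (monomial pi f) = monomial pi (fun x => c * f x).
Proof. by apply/ffunP=> q; rewrite !ffunE mulrCA. Qed.

Lemma unitary_monomial pi f : involutive pi -> (forall x, (f x)^* * f x = 1) ->
  unitary (monomial pi f).
Proof.
move=> piK f_unit; rewrite /unitary adjo_monomial // mulo_monomial.
have -> : ido T = monomial id (fun _ => 1) by apply/ffunP=> q; rewrite !ffunE /= mulr1.
by apply: eq_monomial => x /=; rewrite piK ?f_unit.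
Qed.

End Monomial.

Definition phase (l : bool * bool) (x : bool) : algC :=
  match l with
  | (_, false) => 1
  | (false, true) => (-1) ^+ x
  | (true, true) => 'i * (-1) ^+ x
  end.

Lemma sigma_phase l y x : sigma l y x = (y == x (+) l.1)%:R * phase l x.
Proof. by case: l => [[] []] /=; rewrite ?addbT ?addbF ?mulr1 ?mulrA. Qed.

Lemma phase_unit l x : (phase l x)^* * phase l x = 1.
Proof.
rewrite mulrC -normCK; apply/eqP; rewrite sqrf_eq1; apply/orP; left; apply/eqP.
by case: l => [[] []]; rewrite /= ?normrM ?normCi ?normr_sign ?normr1 ?mul1r.
Qed.

Lemma phase_flip l x b : phase l (x (+) b) = phase l x * (-1) ^+ (l.2 && b).
Proof.
by case: l => [[] []]; case: x; case: b; rewrite /= ?expr0 ?expr1 ?mulr1 //; ring.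
Qed.

Section PauliString.
Variable I : finType.
Implicit Types (p q : I -> bool * bool) (b : I -> bool) (x : {ffun I -> bool}).

Definition flip b x : {ffun I -> bool} := [ffun j => x j (+) b j].

Lemma flipK b : involutive (flip b).
Proof. by move=> x; apply/ffunP=> j; rewrite !ffunE addbK. Qed.

Lemma flipC b b' x : flip b (flip b' x) = flip b' (flip b x).
Proof. by apply/ffunP=> j; rewrite !ffunE addbAC. Qed.

Definition pstring p : oper {ffun I -> bool} :=
  [ffun q : {ffun I -> bool} * {ffun I -> bool} => \prod_j sigma (p j) (q.1 j) (q.2 j)].

Definition xbits p j := (p j).1.
Definition string_phase p x := \prod_j phase (p j) (x j).
Definition flip_sign p b : algC := \prod_j (-1) ^+ ((p j).2 && b j).

Lemma prod_nat_bool (F : I -> bool) : \prod_j (F j)%:R = [forall j, F j]%:R :> algC.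
Proof.
case: (boolP [forall j, F j]) => [/forallP F1 | /forallPn [j Fj]].
  by rewrite big1 // => j _; rewrite F1.
by rewrite (bigD1 j) //= (negbTE Fj) mul0r.
Qed.

Lemma pstring_monomial p : pstring p = monomial (flip (xbits p)) (string_phase p).
Proof.
apply/ffunP=> [[y x]]; rewrite !ffunE /=.
under eq_bigr do rewrite sigma_phase.
rewrite big_split /= prod_nat_bool; congr ((nat_of_bool _)%:R * _).
apply/forallP/eqP => [yx | -> j]; last by rewrite ffunE.
by apply/ffunP=> j; rewrite ffunE; apply/eqP.
Qed.

Lemma string_phase_unit p x : (string_phase p x)^* * string_phase p x = 1.
Proof. by rewrite rmorph_prod -big_split big1 // => j _; apply: phase_unit. Qed.

Lemma pstring_unitary p : unitary (pstring p).
Proof.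
rewrite pstring_monomial.
by apply: unitary_monomial; [apply: flipK | apply: string_phase_unit].
Qed.

Lemma string_phase_flip p b x :
  string_phase p (flip b x) = string_phase p x * flip_sign p b.
Proof. by rewrite -big_split; apply: eq_bigr => j _; rewrite ffunE phase_flip. Qed.

Lemma flip_sign_sqr p b : flip_sign p b ^+ 2 = 1.
Proof. by rewrite -prodrXl big1 // => j _; rewrite sqrr_sign. Qed.

(* (-1) raised to the symplectic product of the two strings *)
Definition string_comm_sign p q := flip_sign p (xbits q) * flip_sign q (xbits p).

Lemma pstring_comm p q :
  mulo (pstring p) (pstring q) =
  scaleo (string_comm_sign p q) (mulo (pstring q) (pstring p)).
Proof.
rewrite !pstring_monomial !mulo_monomial scaleo_monomial.
apply: eq_monomial => x /=; first by rewrite flipC.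
rewrite !string_phase_flip -[LHS]mulr1 -(flip_sign_sqr q (xbits p)) /string_comm_sign.
ring.
Qed.

End PauliString.

Section PauliOperators.
Variables (n : nat) (R : {set 'I_n}).
Implicit Types P Q : pauli n.

Lemma pauli_split P : pauli_op R P = tenso (pauliR R P) (pauliS R P).
Proof.
apply/ffunP=> [[x y]]; rewrite !ffunE /= (bigID (mem R)) /=.
rewrite (big_sub (mem R) (fun i => sigma (P.2 i) (bitAt x i) (bitAt y i))).
rewrite (big_sub [pred i | i \notin R] (fun i => sigma (P.2 i) (bitAt x i) (bitAt y i))).
rewrite mulrCA; congr (_ * (_ * _)); apply: eq_bigr => j _; rewrite /bitAt ?valK //.
by rewrite insubN ?valK //; apply: (valP j).
Qed.

Lemma pauliR_pstring P : pauliR R P = pstring (fun j : qR R => P.2 (val j)).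
Proof. by apply/ffunP=> q; rewrite !ffunE. Qed.

Lemma pauliS_pstring P :
  pauliS R P = scaleo ('i ^+ P.1) (pstring (fun j : qS R => P.2 (val j))).
Proof. by apply/ffunP=> q; rewrite !ffunE. Qed.

Lemma pauliS_unitary P : unitary (pauliS R P).
Proof.
rewrite pauliS_pstring; apply: unitary_scaleo; last exact: pstring_unitary.
by rewrite rmorphXn /= conjCi -exprMn mulNr -expr2 sqrCi opprK expr1n.
Qed.

Lemma pauli_unitary P : unitary (pauli_op R P).
Proof.
rewrite pauli_split pauliR_pstring; apply: unitary_tens; last exact: pauliS_unitary.
exact: pstring_unitary.
Qed.

Definition comm_sign P Q : algC :=
  string_comm_sign (fun j : qR R => P.2 (val j)) (fun j : qR R => Q.2 (val j)) *
  string_comm_sign (fun j : qS R => P.2 (val j)) (fun j : qS R => Q.2 (val j)).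

Lemma comm_sign_sqr P Q : comm_sign P Q ^+ 2 = 1.
Proof. by rewrite /comm_sign /string_comm_sign !exprMn !flip_sign_sqr !mulr1. Qed.

Lemma pauli_comm P Q :
  mulo (pauli_op R P) (pauli_op R Q) =
  scaleo (comm_sign P Q) (mulo (pauli_op R Q) (pauli_op R P)).
Proof.
rewrite !pauli_split !mulo_tens !pauliR_pstring !pauliS_pstring.
rewrite !mulo_scalel !mulo_scaler !scaleoA.
rewrite (pstring_comm (fun j : qR R => P.2 (val j))).
rewrite (pstring_comm (fun j : qS R => P.2 (val j))).
rewrite !scaleoA tenso_scalel !tenso_scaler !scaleoA /comm_sign.
by congr scaleo; ring.
Qed.

End PauliOperators.

Section Z2Group.
Variable d : nat.
Implicit Types g h : grp d.

Definition gid : grp d := [ffun => false].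

Lemma gmulgg g : gmul g g = gid.
Proof. by apply/ffunP=> i; rewrite !ffunE addbb. Qed.

Lemma gmulK g : involutive (gmul g).
Proof. by move=> h; apply/ffunP=> i; rewrite !ffunE addKb. Qed.

Lemma sum_gmul (V : nmodType) (F : grp d -> V) g : \sum_h F (gmul g h) = \sum_h F h.
Proof. exact/esym/reindex_inj/inv_inj/gmulK. Qed.

Lemma sum_character_eq0 (chi : grp d -> algC) g :
  (forall x y, chi (gmul x y) = chi x * chi y) -> chi g = -1 -> \sum_h chi h = 0.
Proof.
move=> chiM chig; have : \sum_h chi h = - \sum_h chi h.
  by rewrite -{1}(sum_gmul _ g) -sumrN; apply: eq_bigr => h _; rewrite chiM chig mulN1r.
by move/eqP; rewrite -addr_eq0 -mulr2n mulrn_eq0 => /eqP.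
Qed.

End Z2Group.

Section StabilizerCode.
Variables (n d : nat) (R : {set 'I_n}) (U : grp d -> pauli n) (e : vect (confR R)).
Local Notation W g := (pauli_op R (U g)).
Local Notation B g := (pauliS R (U g)).
Local Notation o g := (orient R U e g).
Local Notation sqrtG := (sqrtC (#|{: grp d}|%:R : algC)).

Lemma sqrtG_real : sqrtG^* = sqrtG.
Proof. by rewrite geC0_conj // sqrtC_ge0 ler0n. Qed.

Lemma sum_sqrtG_inv2 : \sum_(g : grp d) sqrtG^-1 * sqrtG^-1 = 1.
Proof.
have sqrtG_neq0 : sqrtG != 0.
  by rewrite sqrtC_eq0 pnatr_eq0 -lt0n; apply/card_gt0P; exists (gid d).
rewrite sumr_const; change (sqrtG^-1 * sqrtG^-1 *+ #|{: grp d}| = 1).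
rewrite -(mulr_natr (sqrtG^-1 * sqrtG^-1)) -[X in _ * X]sqrtCK expr2.
by field.
Qed.

Lemma TR_sum : TR R U e = \sum_g tenso (outer (o g) (o g)) (adjo (B g)).
Proof. by apply/ffunP=> p; rewrite ffunE sum_ffunE. Qed.

Lemma app_TR v :
  app (TR R U e) v = \sum_h tensv (o h) (partial_dotv e (app (adjo (W h)) v)).
Proof.
rewrite TR_sum app_sumo; apply: eq_bigr => h _.
by rewrite pauli_split; apply: app_tenso_outer.
Qed.

Definition orbit_sum (psi : vect (confS R)) : vect (kin R) :=
  \sum_g app (W g) (tensv e psi).

Section Representation.
Hypothesis U_mul : forall g h, W (gmul g h) = mulo (W g) (W h).

Lemma W_gid : W (gid d) = ido (kin R).
Proof.
have WW := U_mul (gid d) (gid d); rewrite gmulgg in WW.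
rewrite -[RHS](pauli_unitary R (U (gid d))) {3}WW -muloA.
by rewrite (pauli_unitary R (U (gid d))) mul1o.
Qed.

Lemma W_adj g : adjo (W g) = W g.
Proof.
rewrite -[LHS]mulo1 -W_gid -(gmulgg g) U_mul -muloA (pauli_unitary R (U g)).
exact: mul1o.
Qed.

Lemma W_orbit_sum h psi : app (W h) (orbit_sum psi) = orbit_sum psi.
Proof.
rewrite app_sumv; under eq_bigr do rewrite -app_mulo -U_mul.
exact: (sum_gmul (fun g => app (W g) (tensv e psi))).
Qed.

Section Error.
Variable P : pauli n.

Definition syndrome h := comm_sign R (U h) P.

Lemma W_comm h :
  mulo (W h) (pauli_op R P) = scaleo (syndrome h) (mulo (pauli_op R P) (W h)).
Proof. exact: pauli_comm. Qed.

Lemma syndrome_sqr h : syndrome h ^+ 2 = 1.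
Proof. exact: comm_sign_sqr. Qed.

Lemma syndrome_real h : (syndrome h)^* = syndrome h.
Proof.
have /eqP := syndrome_sqr h; rewrite sqrf_eq1 => /orP [] /eqP ->.
  exact: conjC1.
exact: rmorphN1.
Qed.

Lemma syndrome_mul g h : syndrome (gmul g h) = syndrome g * syndrome h.
Proof.
pose x0 : kin R := ([ffun => false], [ffun => false]).
apply: (@scaleo_inj _ x0 _ _ (mulo (pauli_op R P) (W (gmul g h)))).
  by apply: unitary_mulo; apply: pauli_unitary.
rewrite -W_comm U_mul muloA W_comm mulo_scaler -!muloA W_comm mulo_scalel.
by rewrite scaleoA !muloA -U_mul mulrC.
Qed.

End Error.

Hypothesis orient_orthonormal : forall g h, dotv (o g) (o h) = (g == h)%:R.

Lemma dot_orient_oneR g : dotv (o g) (oneR R U e) = sqrtG^-1.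
Proof.
rewrite /dotv; under eq_bigr do rewrite [oneR _ _ _ _]ffunE mulrCA big_distrr.
rewrite -big_distrr exchange_big /=.
under eq_bigr do rewrite -/(dotv (o g) (o _)) orient_orthonormal -[_%:R]mulr1.
by rewrite sum_delta mulr1.
Qed.

Lemma dotv_oneR : dotv (oneR R U e) (oneR R U e) = 1.
Proof.
have -> : oneR R U e = [ffun x => \sum_g sqrtG^-1 * o g x].
  by apply/ffunP=> x; rewrite !ffunE big_distrr.
rewrite dotv_orthonormal_sum // -[RHS]sum_sqrtG_inv2; apply: eq_bigr => g _.
by rewrite fmorphV /= sqrtG_real.
Qed.

Lemma TR_adj_oneR psi :
  app (adjo (TR R U e)) (tensv (oneR R U e) psi) = [ffun y => sqrtG^-1 * orbit_sum psi y].
Proof.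
rewrite TR_sum adjo_sum app_sumo.
under eq_bigr do rewrite adjo_tens adjo_outer adjoK app_tens app_outer dot_orient_oneR.
apply/ffunP=> y; rewrite [RHS]ffunE !sum_ffunE big_distrr; apply: eq_bigr => g _.
by rewrite pauli_split app_tens !ffunE /= mulrA.
Qed.

Definition error_state P : vect (confR R) :=
  [ffun r => \sum_h sqrtG^-1 * syndrome P h * o h r].

Definition error_logical P : oper (confS R) :=
  compress e (mulo (pauli_op R P) (\sum_g W g)).

Lemma TR_error_factor P psi :
  app (TR R U e) (app (pauli_op R P) (app (adjo (TR R U e)) (tensv (oneR R U e) psi)))
  = tensv (error_state P) (app (error_logical P) psi).
Proof.
set Epsi := app (pauli_op R P) (orbit_sum psi).
have component h : partial_dotv e (app (adjo (W h)) [ffun y => sqrtG^-1 * Epsi y]) =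
    [ffun t => sqrtG^-1 * syndrome P h * partial_dotv e Epsi t].
  rewrite W_adj app_scalev -app_mulo W_comm app_scaleo app_mulo W_orbit_sum.
  by rewrite !partial_dotv_scale; apply/ffunP=> t; rewrite !ffunE mulrA.
rewrite TR_adj_oneR app_scalev app_TR; under eq_bigr do rewrite component.
by rewrite sum_tensv_scale app_compress app_mulo app_sumo.
Qed.

Lemma error_state_norm P : dotv (error_state P) (error_state P) = 1.
Proof.
rewrite dotv_orthonormal_sum // -[RHS]sum_sqrtG_inv2; apply: eq_bigr => h _.
rewrite rmorphM /= fmorphV /= sqrtG_real syndrome_real.
transitivity (sqrtG^-1 * sqrtG^-1 * syndrome P h ^+ 2); first by ring.
by rewrite syndrome_sqr mulr1.
Qed.

Lemma error_state_orth P Q :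
  error_state P = error_state Q \/ dotv (error_state P) (error_state Q) = 0.
Proof.
case: (boolP [forall h, syndrome P h == syndrome Q h]).
  move=> /forallP synPQ; left; apply/ffunP=> r; rewrite !ffunE.
  by apply: eq_bigr => h _; rewrite (eqP (synPQ h)).
move=> /forallPn [h synPQh].
right; rewrite dotv_orthonormal_sum //.
transitivity (sqrtG^-1 * sqrtG^-1 * \sum_h syndrome P h * syndrome Q h).
  rewrite big_distrr; apply: eq_bigr => h' _.
  by rewrite rmorphM /= fmorphV /= sqrtG_real syndrome_real; ring.
rewrite (@sum_character_eq0 _ _ h) ?mulr0 // => [g g'|].
  by rewrite !syndrome_mul; ring.
have /eqP : (syndrome P h * syndrome Q h) ^+ 2 = 1.
  by rewrite exprMn !syndrome_sqr mulr1.
rewrite sqrf_eq1 => /orP [/eqP synPQ1 | /eqP //]; case/eqP: synPQh.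
transitivity (syndrome P h * syndrome Q h * syndrome Q h); last by rewrite synPQ1 mul1r.
by rewrite -mulrA -expr2 syndrome_sqr mulr1.
Qed.

Hypothesis card_confR : #|confR R| = #|grp d|.

Lemma TR_coisometry : mulo (TR R U e) (adjo (TR R U e)) = ido (kin R).
Proof.
have term g h : mulo (tenso (outer (o g) (o g)) (adjo (B g)))
                     (adjo (tenso (outer (o h) (o h)) (adjo (B h)))) =
                scaleo (g == h)%:R (tenso (outer (o g) (o h)) (mulo (adjo (B g)) (B h))).
  rewrite adjo_tens adjo_outer adjoK mulo_tens mulo_outer orient_orthonormal.
  exact: tenso_scalel.
rewrite TR_sum adjo_sum mulo_suml.
under eq_bigr => g _ do rewrite mulo_sumr.
under eq_bigr => g _ do under eq_bigr => h _ do rewrite term.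
under eq_bigr => g _ do rewrite sum_scaleo_delta pauliS_unitary.
by rewrite -tenso_suml sum_outer_orthonormal // tenso_id.
Qed.

Lemma TR_unitary : unitary (TR R U e).
Proof. exact: mulo1C TR_coisometry. Qed.

Lemma TR_adj_unitary : unitary (adjo (TR R U e)).
Proof. by rewrite /unitary adjoK TR_coisometry. Qed.

Lemma error_logical_unitary P : unitary (error_logical P).
Proof.
apply: isometry_unitary => psi phi.
have TU := TR_unitary; have TAU := TR_adj_unitary; have PU := pauli_unitary R P.
rewrite -[LHS]mul1r -{1}(error_state_norm P) -dotv_tens -!TR_error_factor.
by rewrite !dotv_unitary // dotv_tens dotv_oneR mul1r.
Qed.

End Representation.
End StabilizerCode.

Theorem mainTheorem9
  (n k : nat) (hkn : (k <= n)%N)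
  (R : {set 'I_n}) (hR : #|R| = (n - k)%N)
  (U : grp (n - k) -> pauli n)
  (hU : pauli_stab_rep R U)
  (hUR : injective (fun g => pauliR R (U g)))
  (hUS : exists g, pauliS R (U g) <> ido (confS R))
  (e : vect (confR R))
  (hideal : forall g h, dotv (orient R U e g) (orient R U e h) = (g == h)%:R)
  (m : nat) (E : 'I_m -> pauli n) (hE : correctable R U E) :
  exists (w : 'I_m -> vect (confR R)) (L : 'I_m -> oper (confS R)),
    [/\ forall i, dotv (w i) (w i) = 1,
        forall i j, w i = w j \/ dotv (w i) (w j) = 0,
        forall i, unitary (L i) &
        forall (i : 'I_m) (psi : vect (confS R)),
          app (TR R U e)
            (app (pauli_op R (E i))
               (app (adjo (TR R U e)) (tensv (oneR R U e) psi)))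
          = tensv (w i) (app (L i) psi)].
Proof.
case: hU => U_mul _ _.
have card_confR : #|confR R| = #|grp (n - k)|.
  by rewrite !card_ffun card_sig card_ord card_bool -hR; congr (_ ^ _)%N; apply: eq_card.
exists (fun i => error_state U e (E i)), (fun i => error_logical U e (E i)).
split=> [i | i j | i | i psi].
- exact: error_state_norm.
- exact: error_state_orth.
- exact: error_logical_unitary.
- exact: TR_error_factor.
Qed.
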